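(* Consider the discounted repeated power control game with discount factor $\lambda\in(0,1)$ described in the context. Assume that for every $i\in\mathcal{K}$, $$\lambda\le\frac{\eta_i^{\min}\delta(\beta^*,\tilde\gamma)}{\eta_i^{\min}\delta(\beta^*,\tilde\gamma)+\eta_i^{\max}\left[(K-1)f(\beta^* )-\delta(\beta^*,\tilde\gamma)\right]},$$ where $\delta(\beta^*,\tilde\gamma)=\frac{1-(K-1)\tilde\gamma}{\tilde\gamma}f(\tilde\gamma)-\frac{1-(K-1)\beta^*}{\beta^*}f(\beta^* )$. Then, for any distribution of the channel gains, the joint strategy in which each transmitter $i$ plays at stage $t$ the power $\tilde p_i(t)$ as long as all the other players have played the operating point powers $\tilde{\underline{p}}_{-i}$, and the one-shot Nash equilibrium power $p_i^*(t)$ otherwise, is a subgame perfect Nash equilibrium of the discounted repeated game.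
   Context: There are $K\ge2$ transmitters $i\in\mathcal{K}=\{1,\dots,K\}$; $\sigma^2>0$ is the noise variance; transmitter $i$ has rate $R_i>0$ and power set $[0,P_i^{\max}]$. At each stage $t$ transmitter $i$ has channel gain $g_i(t)$ with $|g_i(t)|^2\in[\eta_i^{\min},\eta_i^{\max}]$, $0<\eta_i^{\min}\le\eta_i^{\max}$ (random, with arbitrary distribution; transmitter $i$ knows its own current gain). For a power profile $\underline{p}$, $\mathrm{SINR}_i=\frac{p_i|g_i|^2}{\sum_{j\neq i}p_j|g_j|^2+\sigma^2}$ and the stage utility is $u_i(\underline{p})=\frac{R_i f(\mathrm{SINR}_i)}{p_i}$, with $f$ a common sigmoidal efficiency function, $f(0)=0$. $\beta^*$ is the unique positive solution of $xf'(x)-f(x)=0$ (with $(K-1)\beta^*<1$) and $p_i^*(t)=\frac{\sigma^2}{|g_i(t)|^2}\frac{\beta^*}{1-(K-1)\beta^*}$ is the one-shot Nash equilibrium power. It is assumed that there exists $x_0\in]0,\frac1{K-1}[$ with $\frac{f''(x)}{f'(x)}-\frac{2(K-1)}{1-(K-1)x}$ strictly positive on $]0,x_0[$ and strictly negative on $]x_0,\frac1{K-1}[$; $\tilde\gamma$ is the unique solution in $]0,\frac1{K-1}[$ of $x[1-(K-1)x]f'(x)-f(x)=0$, and the operating point powers are $\tilde p_i(t)=\frac{\sigma^2}{|g_i(t)|^2}\frac{\tilde\gamma}{1-(K-1)\tilde\gamma}$. Powers $p_i^*,\tilde p_i$ lie in $[0,P_i^{\max}]$. At each stage every transmitter observes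 the public signal $\omega(t)=\sigma^2+\sum_{i=1}^K|g_i(t)|^2p_i(t)$ (deviations from the operating point are detected through it). A pure strategy of transmitter $i$ is a sequence of maps $\tau_{i,t}$ from histories $(\omega(1),\dots,\omega(t-1),p_i(1),\dots,p_i(t-1))$ (together with the current own channel gain) to $[0,P_i^{\max}]$. The payoff of transmitter $i$ is the (expected) discounted sum $v_i^\lambda(\underline\tau)=\sum_{t=1}^\infty\lambda(1-\lambda)^{t-1}u_i(\underline{p}(t))$, where $\underline{p}(t)$ is the profile induced by $\underline\tau$. A joint strategy is a Nash equilibrium if no transmitter can increase its payoff by unilaterally deviating; it is subgame perfect if it induces a Nash equilibrium after every possible history. *)

From HB Require Import structures.
From mathcomp Require Import all_boot all_order all_algebra.
From mathcomp Require Import all_classical all_reals all_analysis.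
Set Implicit Arguments. Unset Strict Implicit. Unset Printing Implicit Defensive.
Import Order.TTheory GRing.Theory Num.Theory.
Import numFieldNormedType.Exports.
Local Open Scope classical_set_scope.
Local Open Scope ring_scope.

Section PowerGame.
Variable R : realType.

Definition sigmoidal (f : R -> R) : Prop :=
  [/\ f 0 = 0,
      {within [set x : R | 0 <= x], continuous f},
      (forall x : R, 0 < x -> derivable f x 1 /\ derivable (derive1 f) x 1),
      (forall x y : R, 0 <= x -> x < y -> f x < f y) /\ (exists2 xf : R, 0 < xf &
         (forall x, 0 < x < xf -> 0 < (derive1 (derive1 f)) x) /\
         (forall x, xf < x -> (derive1 (derive1 f)) x < 0)) &
      f x @[x --> +oo] --> (1 : R)].

Variable K : nat.

(* a power profile / a channel-gain profile (|g_i|^2) : one real per transmitter *)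
Definition profile := 'I_K -> R.

Definition signal (sigma2 : R) (g p : profile) : R :=
  sigma2 + \sum_(i < K) g i * p i.

Definition SINR (sigma2 : R) (g p : profile) (i : 'I_K) : R :=
  p i * g i / (\sum_(j < K | j != i) p j * g j + sigma2).

(* stage utility u_i = R_i f(SINR_i) / p_i  (with the convention x/0 = 0) *)
Definition utility (f : R -> R) (Rate : profile) (sigma2 : R) (g p : profile)
  (i : 'I_K) : R :=
  Rate i * f (SINR sigma2 g p i) / p i.

(* A pure strategy: maps (past public signals omega(1..t-1), own past powers
   p_i(1..t-1), current own channel gain |g_i(t)|^2) to a power. *)
Definition strategy := seq R -> seq R -> R -> R.

Definition valid_strategy (etamin etamax Pmax : profile) (i : 'I_K)
  (s : strategy) : Prop :=
  forall ws ps gi, etamin i <= gi <= etamax i -> 0 <= s ws ps gi <= Pmax i.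

(* history: public signals and each transmitter's own past powers *)
Definition history := (seq R * ('I_K -> seq R))%type.

Definition consistent_history (h : history) : Prop :=
  forall i, size (h.2 i) = size h.1.

(* powers played at the history h (stage size h.1 + 1) with gain sequence g *)
Definition powers_at (tau : 'I_K -> strategy) (g : nat -> profile)
  (h : history) : profile :=
  fun i => tau i h.1 (h.2 i) (g (size h.1) i).

Definition extend (sigma2 : R) (tau : 'I_K -> strategy) (g : nat -> profile)
  (h : history) : history :=
  let p := powers_at tau g h in
  (rcons h.1 (signal sigma2 (g (size h.1)) p), fun i => rcons (h.2 i) (p i)).

Fixpoint play (sigma2 : R) (tau : 'I_K -> strategy) (g : nat -> profile)
  (h0 : history) (n : nat) : history :=
  match n with
  | 0 => h0
  | n'.+1 => extend sigma2 tau g (play sigma2 tau g h0 n')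
  end.

(* discounted continuation payoff of transmitter i, for a realization g of
   the channel gains (g t = gains at stage t+1), starting after history h0;
   the weights are lambda (1-lambda)^(n) for the n-th stage of the subgame *)
Definition cont_payoff (f : R -> R) (Rate : profile) (sigma2 lambda : R)
  (tau : 'I_K -> strategy) (g : nat -> profile) (h0 : history) (i : 'I_K)
  : \bar R :=
  (\sum_(0 <= n <oo)
     ((lambda * (1 - lambda) ^+ n *
       utility f Rate sigma2 (g (size (play sigma2 tau g h0 n).1))
         (powers_at tau g (play sigma2 tau g h0 n)) i)%:E))%E.

Definition deviate (tau : 'I_K -> strategy) (i : 'I_K) (s : strategy)
  : 'I_K -> strategy :=
  fun j => if j == i then s else tau j.

Definition exp_cont_payoff d (T : measurableType d) (P : probability T R)
  (gain : nat -> 'I_K -> T -> R) (f : R -> R) (Rate : profile)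
  (sigma2 lambda : R) (tau : 'I_K -> strategy) (h0 : history) (i : 'I_K)
  : \bar R :=
  (\int[P]_w cont_payoff f Rate sigma2 lambda tau (fun t j => gain t j w) h0 i)%E.

Definition subgame_perfect d (T : measurableType d) (P : probability T R)
  (gain : nat -> 'I_K -> T -> R) (f : R -> R) (Rate : profile)
  (sigma2 lambda : R) (etamin etamax Pmax : profile)
  (tau : 'I_K -> strategy) : Prop :=
  (forall i, valid_strategy etamin etamax Pmax i (tau i)) /\
  forall (h : history), consistent_history h ->
  forall (i : 'I_K) (s : strategy), valid_strategy etamin etamax Pmax i s ->
    (exp_cont_payoff P gain f Rate sigma2 lambda (deviate tau i s) h i
       <= exp_cont_payoff P gain f Rate sigma2 lambda tau h i)%E.

(* The trigger strategy of the theorem: transmitter i plays the operating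
   point power tilde p_i(t) as long as every past public signal equals the
   operating-point signal omega~ = sigma^2 + sum_j |g_j|^2 tilde p_j
   = sigma^2 + K sigma^2 gt/(1-(K-1)gt) (i.e. no deviation from the operating
   point has been detected), and the one-shot Nash power p_i^*(t) otherwise. *)
Definition op_power (sigma2 gt gi : R) : R :=
  sigma2 / gi * (gt / (1 - (K.-1)%:R * gt)).

Definition op_signal (sigma2 gt : R) : R :=
  sigma2 + K%:R * sigma2 * gt / (1 - (K.-1)%:R * gt).

Definition trigger (sigma2 bstar gt : R) : 'I_K -> strategy :=
  fun i ws ps gi =>
    if all (fun w => w == op_signal sigma2 gt) ws
    then op_power sigma2 gt gi
    else op_power sigma2 bstar gi.

Definition delta (f : R -> R) (bstar gt : R) : R :=
  (1 - (K.-1)%:R * gt) / gt * f gt - (1 - (K.-1)%:R * bstar) / bstar * f bstar.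

End PowerGame.

From Pilot Require Import Defs.
From HB Require Import structures.
From mathcomp Require Import all_boot all_order all_algebra.
From mathcomp Require Import all_classical all_reals all_analysis.
From mathcomp Require Import ring lra.
Import Order.TTheory GRing.Theory Num.Theory.
Import numFieldNormedType.Exports.
Local Open Scope classical_set_scope.
Local Open Scope ring_scope.
Set Implicit Arguments. Unset Strict Implicit. Unset Printing Implicit Defensive.

(* The efficiency ratio f(x)/x is maximal at [bstar], the zero of
   x f'(x) - f(x).  Hence, when the other transmitters play the powers of SINR
   level gamma, a transmitter earns at most (1 - (K-1) gamma) f(bstar)/bstar
   times R_i |g_i|^2/sigma^2: exactly what the one-shot Nash equilibrium
   (gamma = bstar) pays, while the operating point pays delta more.  A
   deviation from the operating point changes the public signal, so it is
   detected at the next stage and punished by Nash play forever.  Comparing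
   the two payoff streams stage by stage through a telescoping potential, the
   one-time gain (at most (K-1) f(bstar) - delta, weighted by |g_i|^2 <=
   eta_max) is outweighed by the discounted loss of delta per stage (weighted
   by |g_i|^2 >= eta_min) as soon as lambda satisfies the bound; the
   comparison holds for every realization of the gains, hence in expectation. *)

Section RatioMaximum.
Variables (R : realType) (f : R -> R).
Hypothesis f_sigmoidal : sigmoidal f.

Let gap (x : R) := x * derive1 f x - f x.

Lemma sigmoidal_is_derive (x : R) : 0 < x -> is_derive x 1 f (derive1 f x).
Proof.
case: f_sigmoidal => _ _ fD _ _ x_gt0; have [fDx _] := fD x x_gt0.
by rewrite derive1E; apply: derivableP.
Qed.

Lemma sigmoidal_is_derive2 (x : R) : 0 < x ->
  is_derive x 1 (derive1 f) (derive1 (derive1 f) x).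
Proof.
case: f_sigmoidal => _ _ fD _ _ x_gt0; have [_ fD2x] := fD x x_gt0.
by rewrite derive1E; apply: derivableP.
Qed.

Lemma is_derive_ratio (x : R) : 0 < x ->
  is_derive x 1 (fun y => f y / y) (gap x / x ^+ 2).
Proof.
move=> x_gt0; have x_neq0 : x != 0 by rewrite gt_eqF.
have := is_deriveM (sigmoidal_is_derive x_gt0)
  (is_deriveV x_neq0 (is_derive_id x 1)).
suff -> : gap x / x ^+ 2 = f x *: (- x ^- 2 *: (1 : R)) + x^-1 *: derive1 f x by [].
by rewrite /gap /GRing.scale /= mulr1; field.
Qed.

Let within_pos_segment (F : R -> R) (a b : R) :
  (forall x, 0 < x -> {for x, continuous F}) -> 0 < a ->
  {within `[a, b], continuous F}.
Proof.
move=> Fc a_gt0; apply: continuous_in_subspaceT => x; rewrite inE /=.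
by case/andP=> ax _; apply: Fc; exact: lt_le_trans a_gt0 ax.
Qed.

Let differentiable_continuous_at (F : R -> R) (x dF : R) :
  is_derive x 1 F dF -> {for x, continuous F}.
Proof.
by case=> F_derivable _; apply: differentiable_continuous; rewrite -derivable1_diffP.
Qed.

Let continuous_derive1 (x : R) : 0 < x -> {for x, continuous (derive1 f)}.
Proof. by move/sigmoidal_is_derive2/differentiable_continuous_at. Qed.

Let continuous_gap (x : R) : 0 < x -> {for x, continuous gap}.
Proof.
move=> x_gt0; apply: continuousB.
  by apply: continuousM; [exact: cvg_id | exact: continuous_derive1].
exact: differentiable_continuous_at (sigmoidal_is_derive x_gt0).
Qed.

Let continuous_ratio (x : R) : 0 < x -> {for x, continuous (fun y => f y / y)}.
Proof. by move/is_derive_ratio/differentiable_continuous_at. Qed.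

Lemma gap_gt0_near0 : exists2 e : R, 0 < e & forall x, 0 < x < e -> 0 < gap x.
Proof.
case: f_sigmoidal => f0 fc _ [_ [e e_gt0 [convex _]]] _.
exists e => // x /andP[x_gt0 xe].
have [c /[1!in_itv] /= /andP[c_gt0 cx] fxE] :
    exists2 c, c \in `]0, x[ & f x - f 0 = derive1 f c * (x - 0).
  apply: MVT => // [y /[1!in_itv] /andP[y_gt0 _]|].
    exact: sigmoidal_is_derive.
  by apply: continuous_subspaceW fc => y /=; rewrite in_itv /= => /andP[].
have [d /[1!in_itv] /= /andP[cd dx] dfxE] : exists2 d, d \in `]c, x[ &
    derive1 f x - derive1 f c = derive1 (derive1 f) d * (x - c).
  apply: MVT => // [y /[1!in_itv] /andP[cy _]|].
    by apply: sigmoidal_is_derive2; apply: lt_trans cy.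
  exact: within_pos_segment continuous_derive1 c_gt0.
have : 0 < derive1 (derive1 f) d * (x - c).
  rewrite mulr_gt0 ?subr_gt0 // convex // (lt_trans c_gt0 cd).
  exact: lt_trans dx xe.
rewrite -dfxE /gap; move: fxE; rewrite f0 !subr0 => ->.
by rewrite [_ * x]mulrC -mulrBr => ?; apply: mulr_gt0.
Qed.

Lemma sigmoidal_ratio_vanishes (x e : R) : 0 < e -> exists2 y, x < y & f y / y < e.
Proof.
case: f_sigmoidal => _ _ _ _ f_lim e_gt0.
have : \forall t \near +oo, f t < 2 by apply: (cvgr_lt 1 f_lim); lra.
case=> M [_ f_lt2].
pose y := Num.max (M + 1) (Num.max (x + 1) (2 / e + 1)).
have [My xy ey] : [/\ M < y, x < y & 2 / e < y].
  by rewrite !lt_max !ltrDl ltr01 !orbT.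
have y_gt0 : 0 < y by apply: lt_trans ey; rewrite divr_gt0.
exists y => //; rewrite ltr_pdivrMr //; move: ey; rewrite ltr_pdivrMr // mulrC.
by have := f_lt2 y My; lra.
Qed.

Variable bstar : R.
Hypothesis bstar_gt0 : 0 < bstar.
Hypothesis gap_eq0 : forall x, 0 < x -> gap x = 0 -> x = bstar.

(* Intermediate value theorem: [bstar] is the only zero of [gap] on ]0, +oo[. *)
Lemma gap_sign_change (x y : R) : 0 < x -> x <= y ->
  Num.min (gap x) (gap y) <= 0 <= Num.max (gap x) (gap y) -> x <= bstar <= y.
Proof.
move=> x_gt0 xy gap_xy.
have [c /[1!in_itv] /= /andP[xc cy] gapc] :=
  IVT xy (within_pos_segment (b := y) continuous_gap x_gt0) gap_xy.
by rewrite -(gap_eq0 (lt_le_trans x_gt0 xc) gapc) xc cy.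
Qed.

Lemma ratio_mvt (x y : R) : 0 < x -> x < y -> exists2 c, c \in `]x, y[ &
  f y / y - f x / x = gap c / c ^+ 2 * (y - x).
Proof.
move=> x_gt0 xy; apply: (MVT (f := fun y => f y / y)) => //.
  by move=> z /[1!in_itv] /= /andP[xz _]; apply: is_derive_ratio; apply: lt_trans xz.
exact: within_pos_segment continuous_ratio x_gt0.
Qed.

Lemma ratio_le_of_gap_ge0 (x y : R) : 0 < x -> x < y ->
  {in `]x, y[, forall c, 0 <= gap c} -> f x / x <= f y / y.
Proof.
move=> x_gt0 xy gap_ge0; have [c cxy ratioE] := ratio_mvt x_gt0 xy.
have c_gt0 : 0 < c by move: cxy; rewrite in_itv => /andP[xc _]; exact: lt_trans xc.
rewrite -subr_ge0 ratioE mulr_ge0 // ?subr_ge0 ?(ltW xy) //.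
by rewrite divr_ge0 ?gap_ge0 // exprn_ge0 // ltW.
Qed.

Lemma ratio_ge_of_gap_le0 (x y : R) : 0 < x -> x < y ->
  {in `]x, y[, forall c, gap c <= 0} -> f y / y <= f x / x.
Proof.
move=> x_gt0 xy gap_le0; have [c cxy ratioE] := ratio_mvt x_gt0 xy.
have c_gt0 : 0 < c by move: cxy; rewrite in_itv => /andP[xc _]; exact: lt_trans xc.
rewrite -subr_le0 ratioE mulr_le0_ge0 // ?subr_ge0 ?(ltW xy) //.
by rewrite mulr_le0_ge0 ?gap_le0 // invr_ge0 exprn_ge0 // ltW.
Qed.

Lemma gap_gt0_below (x : R) : 0 < x < bstar -> 0 < gap x.
Proof.
case/andP=> x_gt0 x_lt_bstar; rewrite ltNge; apply/negP => gapx_le0.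
have [e e_gt0 gap_gt0] := gap_gt0_near0.
pose y := Num.min e x / 2.
have m_gt0 : 0 < Num.min e x by rewrite lt_min e_gt0 x_gt0.
have y_gt0 : 0 < y by rewrite divr_gt0.
have : y < Num.min e x by rewrite /y; lra.
rewrite lt_min => /andP[ye yx].
have gapy_gt0 : 0 < gap y by rewrite gap_gt0 // y_gt0.
suff /andP[_] : y <= bstar <= x by move: x_lt_bstar; lra.
apply: gap_sign_change y_gt0 (ltW yx) _.
by rewrite ge_min gapx_le0 orbT le_max ltW.
Qed.

Lemma gap_lt0_above (x : R) : bstar < x -> gap x < 0.
Proof.
case: f_sigmoidal => f0 _ _ [f_incr _] _ bstar_lt_x.
have x_gt0 := lt_trans bstar_gt0 bstar_lt_x.
rewrite ltNge; apply/negP => gapx_ge0.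
have gap_ge0 y : x <= y -> 0 <= gap y.
  move=> xy; rewrite leNgt; apply/negP => gapy_lt0.
  suff /andP[] : x <= bstar <= y by move: bstar_lt_x; lra.
  by apply: gap_sign_change x_gt0 xy _; rewrite ge_min le_max gapx_ge0 (ltW gapy_lt0) !orbT.
have fx_gt0 : 0 < f x by rewrite -f0 f_incr.
have [y xy ratio_y] := sigmoidal_ratio_vanishes x (divr_gt0 fx_gt0 x_gt0).
have := ratio_le_of_gap_ge0 x_gt0 xy.
suff /[swap]/[apply] : {in `]x, y[, forall c, 0 <= gap c} by lra.
by move=> c; rewrite in_itv => /andP[/ltW xc _]; apply: gap_ge0.
Qed.

Lemma sigmoidal_ratio_le (x : R) : 0 <= x -> f x * bstar <= x * f bstar.
Proof.
case: f_sigmoidal => f0 _ _ _ _.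
rewrite le_eqVlt => /orP[/eqP <-|x_gt0]; first by rewrite f0 !mul0r.
suff : f x / x <= f bstar / bstar.
  by rewrite ler_pdivrMr // mulrAC ler_pdivlMr // mulrC [x * _]mulrC.
have [x_lt|bstar_lt|->] := ltgtP x bstar; last by [].
- apply: ratio_le_of_gap_ge0 => // c; rewrite in_itv /= => /andP[xc cb].
  by apply/ltW/gap_gt0_below; rewrite cb (lt_trans x_gt0 xc).
- apply: ratio_ge_of_gap_le0 => // c; rewrite in_itv /= => /andP[bc _].
  exact/ltW/gap_lt0_above.
Qed.

End RatioMaximum.

(* No measurability is needed: the integral of a nonnegative function is the
   supremum of the integrals of the simple functions below it. *)
Lemma ge0_le_integralT (R : realType) d (T : measurableType d)
    (mu : {measure set T -> \bar R}) (F G : T -> \bar R) :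
  (forall x, 0 <= F x)%E -> (forall x, F x <= G x)%E ->
  (\int[mu]_x F x <= \int[mu]_x G x)%E.
Proof.
move=> F_ge0 FG; have G_ge0 x : (0 <= G x)%E by apply: le_trans (FG x).
rewrite !ge0_integralTE //; apply: ereal_sup_le => _ [s /= sF <-].
by exists s => //= x; apply: le_trans (sF x) (FG x).
Qed.

Section TelescopingComparison.
Variables (R : realType) (a b phi : nat -> R).
Hypothesis phi0 : phi 0%N = 0.
Hypothesis le_telescoping : forall n, a n <= b n + phi n.+1 - phi n.

Lemma sum_le_telescoping N :
  \sum_(0 <= n < N) a n <= \sum_(0 <= n < N) b n + phi N.
Proof.
elim: N => [|N IH]; first by rewrite !big_geq // phi0 addr0.
by rewrite !big_nat_recr //=; have := le_telescoping N; lra.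
Qed.

Lemma nneseries_le_telescoping (C q : R) :
  (forall n, 0 <= a n) -> (forall n, 0 <= b n) ->
  (forall n, phi n <= C * q ^+ n) -> 0 <= q < 1 ->
  (\sum_(0 <= n <oo) (a n)%:E <= \sum_(0 <= n <oo) (b n)%:E)%E.
Proof.
move=> a_ge0 b_ge0 phi_le /andP[q_ge0 q_lt1].
apply: lime_le; first by apply: is_cvg_nneseries => n _ _; rewrite lee_fin.
apply: nearW => k; apply/lee_addgt0Pr => e e_gt0.
have qn_cvg : (GRing.exp q : R ^nat) @ \oo --> 0 by apply: cvg_expr; rewrite ger0_norm.
have e'_gt0 : 0 < e / (`|C| + 1) by rewrite divr_gt0 // ltr_wpDl.
have [N _ /(_ _ (leqnn N))[kN qN_lt]] :=
  filterI (nbhs_infty_ge k) (cvgr_lt 0 qn_cvg _ e'_gt0).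
apply: le_trans (_ : \sum_(0 <= n < N) (b n)%:E + (phi N)%:E <= _)%E.
  rewrite !sumEFin -EFinD lee_fin; apply: le_trans (sum_le_telescoping N).
  by rewrite (big_cat_nat _ kN) //= lerDl sumr_ge0.
apply: leeD; first by apply: nneseries_lim_ge => *; rewrite lee_fin.
rewrite lee_fin; apply: le_trans (phi_le N) _.
have qN_ge0 : 0 <= q ^+ N by apply: exprn_ge0.
apply: le_trans (ler_norm _) _; rewrite normrM (ger0_norm qN_ge0).
apply: le_trans (_ : (`|C| + 1) * q ^+ N <= _); first by rewrite ler_wpM2r // lerDl.
by rewrite -ler_pdivlMl ?ltr_wpDl // mulrC ltW.
Qed.

End TelescopingComparison.

Lemma discount_threshold_incentive (R : realFieldType) (lam e E Y d : R) :
  0 < lam -> 0 < e -> e <= E -> 0 < Y -> d <= Y ->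
  lam <= e * d / (e * d + E * (Y - d)) ->
  0 < d /\ lam * E * (Y - d) <= (1 - lam) * e * d.
Proof.
move=> lam_gt0 e_gt0 eE Y_gt0 dY lam_le; have E_gt0 := lt_le_trans e_gt0 eE.
have d_gt0 : 0 < d.
  rewrite ltNge; apply/negP => d_le0; move: lam_le; apply/negP; rewrite -ltNge.
  apply: le_lt_trans lam_gt0; rewrite mulr_le0_ge0 ?pmulr_rle0 // invr_ge0.
  have : 0 <= (E - e) * - d by rewrite mulr_ge0 ?subr_ge0 ?oppr_ge0.
  by have := mulr_gt0 E_gt0 Y_gt0; nra.
split=> //; have D_gt0 : 0 < e * d + E * (Y - d).
  by rewrite ltr_wpDr ?mulr_gt0 // mulr_ge0 ?subr_ge0 // ltW.
by move: lam_le; rewrite ler_pdivlMr //; nra.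
Qed.

Section TriggerEquilibrium.
Variables (R : realType) (K : nat) (sigma2 : R) (f : R -> R) (Rate : 'I_K -> R).
Variables (bstar gt : R).
Hypothesis K_gt0 : (0 < K)%N.
Hypothesis sigma2_gt0 : 0 < sigma2.
Hypothesis Rate_gt0 : forall i, 0 < Rate i.
Hypothesis f_ge0 : forall x, 0 <= x -> 0 <= f x.
Hypothesis bstar_gt0 : 0 < bstar.
Hypothesis ratio_le_bstar : forall x, 0 <= x -> f x * bstar <= x * f bstar.

Local Notation k1 := ((K.-1)%:R : R).
Local Notation utility := (utility f Rate sigma2).
Local Notation op_power := (op_power K sigma2).

Let k1_ge0 : 0 <= k1. Proof. exact: ler0n. Qed.

Lemma interference_op_power (g p : profile R K) (i : 'I_K) (gm : R) :
  (forall j, 0 < g j) -> (forall j, j != i -> p j = op_power gm (g j)) ->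
  \sum_(j < K | j != i) p j * g j = k1 * (sigma2 * (gm / (1 - k1 * gm))).
Proof.
move=> g_gt0 pE; rewrite (eq_bigr (fun=> sigma2 * (gm / (1 - k1 * gm)))).
  by rewrite sumr_const cardC1 card_ord [RHS]mulr_natl.
by move=> j ji; rewrite pE // /op_power mulrAC divfK ?gt_eqF.
Qed.

Lemma signal_op_power (g p : profile R K) (gm : R) :
  (forall j, 0 < g j) -> (forall j, p j = op_power gm (g j)) ->
  signal sigma2 g p = op_signal K sigma2 gm.
Proof.
move=> g_gt0 pE; rewrite /signal (eq_bigr (fun=> sigma2 * (gm / (1 - k1 * gm)))).
  by rewrite sumr_const card_ord -[_ *+ K]mulr_natl /op_signal; ring.
by move=> j _; rewrite pE /op_power mulrC mulrAC divfK ?gt_eqF.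
Qed.

Lemma op_power_of_signal (g p : profile R K) (i : 'I_K) (gm : R) :
  (forall j, 0 < g j) -> (forall j, j != i -> p j = op_power gm (g j)) ->
  signal sigma2 g p = op_signal K sigma2 gm -> p i = op_power gm (g i).
Proof.
move=> g_gt0 pE; have KE : K%:R = k1 + 1 :> R by rewrite natr1 prednK.
rewrite /signal (bigD1 i) //= (eq_bigr (fun j => p j * g j)) => [|j _]; last exact: mulrC.
rewrite (interference_op_power g_gt0 pE) /op_signal KE => sigE.
have -> : p i = g i * p i / g i by rewrite mulrAC divff ?mul1r ?gt_eqF.
have -> : g i * p i = sigma2 * (gm / (1 - k1 * gm)) by move: sigE; lra.
by rewrite /op_power mulrAC.
Qed.

Lemma utility_ge0 (g p : profile R K) (i : 'I_K) :
  (forall j, 0 < g j) -> (forall j, 0 <= p j) -> 0 <= utility g p i.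
Proof.
move=> g_gt0 p_ge0; rewrite /utility divr_ge0 // mulr_ge0 ?(ltW (Rate_gt0 i)) //.
apply: f_ge0; rewrite /SINR divr_ge0 ?mulr_ge0 ?(ltW (g_gt0 i)) //.
by rewrite addr_ge0 ?(ltW sigma2_gt0) // sumr_ge0 // => j _; rewrite mulr_ge0 ?(ltW (g_gt0 j)).
Qed.

Let rate (x : R) := (1 - k1 * x) / x * f x.

Lemma utility_op_power (g p : profile R K) (i : 'I_K) (gm : R) :
  0 < gm -> k1 * gm < 1 -> (forall j, 0 < g j) ->
  (forall j, p j = op_power gm (g j)) ->
  utility g p i = Rate i * g i / sigma2 * rate gm.
Proof.
move=> gm_gt0 gm_lt1 g_gt0 pE; have d_gt0 : 0 < 1 - k1 * gm by rewrite subr_gt0.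
rewrite /utility /SINR (interference_op_power (gm := gm) g_gt0) => [|j _]; last exact: pE.
have -> : p i * g i / (k1 * (sigma2 * (gm / (1 - k1 * gm))) + sigma2) = gm.
  rewrite pE /op_power; field; rewrite !gt_eqF //.
  by have -> : k1 * (sigma2 * gm) + sigma2 * (1 - k1 * gm) = sigma2 by ring.
by rewrite pE /op_power /rate; field; rewrite !gt_eqF.
Qed.

Lemma utility_le_op_power_others (g p : profile R K) (i : 'I_K) (gm : R) :
  0 < gm -> k1 * gm < 1 -> (forall j, 0 < g j) ->
  (forall j, j != i -> p j = op_power gm (g j)) -> 0 <= p i ->
  utility g p i <= Rate i * g i / sigma2 * ((1 - k1 * gm) * (f bstar / bstar)).
Proof.
move=> gm_gt0 gm_lt1 g_gt0 pE pi_ge0; have d_gt0 : 0 < 1 - k1 * gm by rewrite subr_gt0.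
have gi_gt0 := g_gt0 i.
rewrite /utility /SINR (interference_op_power g_gt0 pE).
have -> : k1 * (sigma2 * (gm / (1 - k1 * gm))) + sigma2 = sigma2 / (1 - k1 * gm).
  by field; rewrite gt_eqF.
have bound_ge0 : 0 <= Rate i * g i / sigma2 * ((1 - k1 * gm) * (f bstar / bstar)).
  apply: mulr_ge0; first by rewrite divr_ge0 ?mulr_ge0 ?ltW.
  apply: mulr_ge0; first exact: ltW.
  by rewrite divr_ge0 ?f_ge0 ?ltW.
move: pi_ge0; rewrite le_eqVlt => /orP[/eqP <-|pi_gt0]; first by rewrite invr0 mulr0.
set x := p i * g i / _.
have x_ge0 : 0 <= x by rewrite /x !divr_ge0 ?mulr_ge0 ?ltW.
have c_ge0 : 0 <= Rate i / (p i * bstar) by rewrite divr_ge0 ?mulr_ge0 ?ltW.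
have := ler_wpM2l c_ge0 (ratio_le_bstar x_ge0).
have -> : Rate i / (p i * bstar) * (f x * bstar) = Rate i * f x / p i.
  by field; rewrite !gt_eqF.
suff -> : Rate i / (p i * bstar) * (x * f bstar) =
    Rate i * g i / sigma2 * ((1 - k1 * gm) * (f bstar / bstar)) by apply.
by rewrite /x; field; rewrite !gt_eqF.
Qed.

Hypothesis gt_gt0 : 0 < gt.
Hypothesis gt_lt : k1 * gt < 1.
Hypothesis bstar_lt : k1 * bstar < 1.

Lemma delta_le : delta K f bstar gt <= k1 * f bstar.
Proof.
have ratio_gt : f gt / gt <= f bstar / bstar.
  by rewrite ler_pdivrMr // mulrAC ler_pdivlMr // [f bstar * _]mulrC ratio_le_bstar ?ltW.
have := mulr_ge0 (mulr_ge0 k1_ge0 (ltW gt_gt0)) (divr_ge0 (f_ge0 (ltW gt_gt0)) (ltW gt_gt0)).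
rewrite /delta; have -> : (1 - k1 * gt) / gt * f gt = f gt / gt - k1 * gt * (f gt / gt) by ring.
have -> : (1 - k1 * bstar) / bstar * f bstar = f bstar / bstar - k1 * f bstar.
  by field; rewrite gt_eqF.
lra.
Qed.

Definition on_path (ws : seq R) := all (fun w => w == op_signal K sigma2 gt) ws.

Local Notation tau := (trigger (K := K) sigma2 bstar gt).
Local Notation level b := (if b then gt else bstar).

Let level_gt0 (b : bool) : 0 < level b. Proof. by case: b. Qed.
Let level_lt (b : bool) : k1 * level b < 1. Proof. by case: b. Qed.

Let op_power_level_gt0 (b : bool) x : 0 < x -> 0 < op_power (level b) x.
Proof. by move=> x_gt0; rewrite /Defs.op_power mulr_gt0 ?divr_gt0 ?subr_gt0. Qed.

Lemma trigger_powers (gg : nat -> profile R K) (H : history R K) j :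
  powers_at tau gg H j = op_power (level (on_path H.1)) (gg (size H.1) j).
Proof. by rewrite /powers_at /trigger /on_path; case: ifP. Qed.

Lemma deviate_powers_other (tau' : 'I_K -> strategy R) i sd gg (H : history R K) j :
  j != i -> powers_at (deviate tau' i sd) gg H j = powers_at tau' gg H j.
Proof. by move=> ji; rewrite /powers_at /deviate (negbTE ji). Qed.

Lemma size_play (tau' : 'I_K -> strategy R) gg (h : history R K) n :
  size (play sigma2 tau' gg h n).1 = (size h.1 + n)%N.
Proof. by elim: n => [|n IH] /=; rewrite ?addn0 // size_rcons IH addnS. Qed.

Lemma on_path_rcons ws w :
  on_path (rcons ws w) = (w == op_signal K sigma2 gt) && on_path ws.
Proof. by rewrite /on_path all_rcons. Qed.

Lemma off_path_play (tau' : 'I_K -> strategy R) gg (h : history R K) n :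
  ~~ on_path h.1 -> ~~ on_path (play sigma2 tau' gg h n).1.
Proof. by move=> off; elim: n => [|n IH] //=; rewrite on_path_rcons negb_and IH orbT. Qed.

Lemma on_path_trigger_play gg (h : history R K) n : (forall t j, 0 < gg t j) ->
  on_path h.1 -> on_path (play sigma2 tau gg h n).1.
Proof.
move=> gg_gt0 on_h; elim: n => [|n IH] //=; rewrite on_path_rcons IH andbT.
by apply/eqP/signal_op_power => // j; rewrite trigger_powers IH.
Qed.

Section Deviation.
Variables (lambda : R) (etamin etamax Pmax : 'I_K -> R) (i : 'I_K).
Variables (sd : strategy R) (gg : nat -> profile R K) (h : history R K).
Hypothesis lambda_gt0 : 0 < lambda.
Hypothesis lambda_lt1 : lambda < 1.
Hypothesis sd_valid : valid_strategy etamin etamax Pmax i sd.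
Hypothesis etamin_gt0 : forall j, 0 < etamin j.
Hypothesis gg_range : forall t j, etamin j <= gg t j <= etamax j.
Hypothesis delta_gt0 : 0 < delta K f bstar gt.
Hypothesis incentive : lambda * etamax i * (k1 * f bstar - delta K f bstar gt)
  <= (1 - lambda) * etamin i * delta K f bstar gt.

Let gg_gt0 t j : 0 < gg t j.
Proof. by have /andP[+ _] := gg_range t j; apply: lt_le_trans. Qed.

Local Notation dev := (deviate tau i sd).
Local Notation Hd n := (play sigma2 dev gg h n).
Local Notation Ht n := (play sigma2 tau gg h n).

Let stage (tau' : 'I_K -> strategy R) n := lambda * (1 - lambda) ^+ n *
  utility (gg (size (play sigma2 tau' gg h n).1))
    (powers_at tau' gg (play sigma2 tau' gg h n)) i.

Let weight n := lambda * (1 - lambda) ^+ n * (Rate i * gg (size h.1 + n) i / sigma2).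

Let discount_ge0 n : 0 <= lambda * (1 - lambda) ^+ n.
Proof. by rewrite mulr_ge0 ?exprn_ge0 // ?subr_ge0 ltW. Qed.

Let weight_ge0 n : 0 <= weight n.
Proof. by rewrite mulr_ge0 // divr_ge0 ?mulr_ge0 ?ltW. Qed.

Lemma stage_trigger n : stage tau n = weight n * rate (level (on_path (Ht n).1)).
Proof.
rewrite /stage /weight size_play.
rewrite (utility_op_power i (level_gt0 (on_path (Ht n).1)) (level_lt _) (gg_gt0 _)).
  by rewrite mulrA.
by move=> j; rewrite trigger_powers size_play.
Qed.

Lemma stage_deviate_le n :
  stage dev n <= weight n * ((1 - k1 * level (on_path (Hd n).1)) * (f bstar / bstar)).
Proof.
rewrite /stage /weight size_play -[X in _ <= X]mulrA ler_wpM2l //.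
apply: utility_le_op_power_others => //.
  by move=> j ji; rewrite deviate_powers_other // trigger_powers size_play.
rewrite /powers_at /deviate eqxx.
by have /andP[] := sd_valid (Hd n).1 ((Hd n).2 i) (gg_range (size (Hd n).1) i).
Qed.

Lemma stage_deviate_on_path n : on_path (Hd n.+1).1 -> stage dev n = stage tau n.
Proof.
rewrite /= on_path_rcons => /andP[/eqP sig on_n].
have on_h : on_path h.1 by apply: contraTT on_n; apply: off_path_play.
have others j : j != i ->
    powers_at dev gg (Hd n) j = op_power gt (gg (size (Hd n).1) j).
  by move=> ji; rewrite deviate_powers_other // trigger_powers on_n.
have self := op_power_of_signal (gg_gt0 _) others sig.
rewrite stage_trigger on_path_trigger_play // /stage /weight size_play.
rewrite (utility_op_power i gt_gt0 gt_lt (gg_gt0 _)) ?mulrA // => j.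
by have [->|ji] := eqVneq j i; rewrite ?self ?others // size_play.
Qed.

Let rate_bstarE : (1 - k1 * bstar) * (f bstar / bstar) = rate bstar.
Proof. by rewrite /rate; ring. Qed.

Let rate_gtE : rate gt = rate bstar + delta K f bstar gt.
Proof. by rewrite /delta /rate; ring. Qed.

Lemma stage_off_path n : ~~ on_path h.1 -> stage dev n <= stage tau n.
Proof.
move=> off_h; apply: le_trans (stage_deviate_le n) _.
by rewrite stage_trigger !(negbTE (off_path_play _ _ _ off_h)) rate_bstarE.
Qed.

Let L := Rate i * etamin i / sigma2 * delta K f bstar gt.

Let weight_ge_min n : lambda * (1 - lambda) ^+ n * (Rate i * etamin i / sigma2) <= weight n.
Proof.
rewrite /weight ler_wpM2l // ler_pM2r ?invr_gt0 // ler_pM2l //.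
by have /andP[] := gg_range (size h.1 + n) i.
Qed.

Let weight_le_max n : weight n <= lambda * (1 - lambda) ^+ n * (Rate i * etamax i / sigma2).
Proof.
rewrite /weight ler_wpM2l // ler_pM2r ?invr_gt0 // ler_pM2l //.
by have /andP[] := gg_range (size h.1 + n) i.
Qed.

Lemma stage_detection n : on_path (Hd n).1 ->
  stage dev n <= stage tau n + L * (1 - lambda) ^+ n.+1.
Proof.
move=> on_n; have on_h : on_path h.1 by apply: contraTT on_n; apply: off_path_play.
apply: le_trans (stage_deviate_le n) _.
rewrite stage_trigger on_path_trigger_play // on_n.
set Y := k1 * f bstar - delta K f bstar gt.
have Y_ge0 : 0 <= Y by rewrite subr_ge0 delta_le.
have one_stage_gain : (1 - k1 * gt) * (f bstar / bstar) <= rate gt + Y.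
  rewrite rate_gtE /Y -rate_bstarE.
  have := mulr_ge0 (mulr_ge0 k1_ge0 (ltW gt_gt0)) (divr_ge0 (f_ge0 (ltW bstar_gt0)) (ltW bstar_gt0)).
  have : (1 - k1 * bstar) * (f bstar / bstar) + k1 * f bstar = f bstar / bstar.
    by field; rewrite gt_eqF.
  lra.
have c_ge0 : 0 <= (1 - lambda) ^+ n * (Rate i / sigma2).
  by rewrite mulr_ge0 ?exprn_ge0 ?divr_ge0 ?subr_ge0 ?ltW.
have := ler_wpM2l c_ge0 incentive.
have := ler_wpM2r Y_ge0 (weight_le_max n).
have := ler_wpM2l (weight_ge0 n) one_stage_gain.
rewrite /L /Y exprSr; lra.
Qed.

Lemma stage_punishment n : on_path h.1 -> ~~ on_path (Hd n).1 ->
  stage dev n <= stage tau n + L * (1 - lambda) ^+ n.+1 - L * (1 - lambda) ^+ n.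
Proof.
move=> on_h off_n; apply: le_trans (stage_deviate_le n) _.
rewrite stage_trigger on_path_trigger_play // (negbTE off_n) rate_bstarE rate_gtE.
by have := ler_wpM2r (ltW delta_gt0) (weight_ge_min n); rewrite /L exprS; lra.
Qed.

(* Once a deviation has been detected, [phi n] bounds from below the
   deviator's discounted loss from stage [n] on; at detection it covers the
   one-stage gain, by [incentive]. *)
Let phi n := if on_path h.1 && ~~ on_path (Hd n).1 then L * (1 - lambda) ^+ n else 0.

Lemma stage_le_telescoping n : stage dev n <= stage tau n + phi n.+1 - phi n.
Proof.
rewrite /phi; have [on_h|off_h] /= := boolP (on_path h.1); last first.
  by rewrite subr0 addr0 stage_off_path.
have [on_Sn|off_Sn] /= := boolP (on_path (Hd n.+1).1).
  have on_n : on_path (Hd n).1 by move: on_Sn; rewrite /= on_path_rcons => /andP[].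
  by rewrite on_n /= subr0 addr0 stage_deviate_on_path.
have [on_n|off_n] /= := boolP (on_path (Hd n).1); last exact: stage_punishment.
by rewrite subr0 stage_detection.
Qed.

Let stage_ge0 (tau' : 'I_K -> strategy R) n :
  (forall H j, 0 <= powers_at tau' gg H j) -> 0 <= stage tau' n.
Proof. by move=> p_ge0; rewrite mulr_ge0 // utility_ge0. Qed.

Let trigger_powers_ge0 H j : 0 <= powers_at tau gg H j.
Proof. by rewrite trigger_powers; apply/ltW/op_power_level_gt0. Qed.

Let deviate_powers_ge0 H j : 0 <= powers_at dev gg H j.
Proof.
have [->|ji] := eqVneq j i; last by rewrite deviate_powers_other.
rewrite /powers_at /deviate eqxx.
by have /andP[] := sd_valid H.1 (H.2 i) (gg_range (size H.1) i).
Qed.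

Lemma cont_payoff_deviate_ge0 :
  (0 <= cont_payoff f Rate sigma2 lambda dev gg h i)%E.
Proof. by apply: nneseries_ge0 => n _ _; rewrite lee_fin stage_ge0. Qed.

Lemma cont_payoff_deviate_le :
  (cont_payoff f Rate sigma2 lambda dev gg h i
     <= cont_payoff f Rate sigma2 lambda tau gg h i)%E.
Proof.
apply: (@nneseries_le_telescoping R (stage dev) (stage tau) phi _
  stage_le_telescoping L (1 - lambda)) => [|n|n|n|].
- by rewrite /phi /= andbN.
- exact: stage_ge0.
- exact: stage_ge0.
- rewrite /phi; case: ifP => _ //.
  apply: mulr_ge0; last by rewrite exprn_ge0 // subr_ge0 ltW.
  by apply: mulr_ge0; [rewrite divr_ge0 ?mulr_ge0 ?ltW | exact: ltW].
- by rewrite subr_ge0 ltW //= ltrBlDr ltrDl.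
Qed.

End Deviation.

End TriggerEquilibrium.

Unset Implicit Arguments.
Theorem theorem9 (R : realType) (K : nat) (hK : (2 <= K)%N)
  (sigma2 : R) (hsigma2 : 0 < sigma2)
  (Rate Pmax etamin etamax : 'I_K -> R)
  (hRate : forall i, 0 < Rate i)
  (heta : forall i, 0 < etamin i <= etamax i)
  (f : R -> R) (hf : sigmoidal f)
  (bstar : R) (hbstar : 0 < bstar)
  (hbstar_eq : bstar * derive1 f bstar - f bstar = 0)
  (hbstar_uniq : forall x : R, 0 < x -> x * derive1 f x - f x = 0 -> x = bstar)
  (hbstar_K : (K.-1)%:R * bstar < 1)
  (hx0 : exists x0 : R, 0 < x0 < 1 / (K.-1)%:R /\
     (forall x : R, 0 < x < x0 ->
        0 < derive1 (derive1 f) x / derive1 f x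
            - 2 * (K.-1)%:R / (1 - (K.-1)%:R * x)) /\
     (forall x : R, x0 < x < 1 / (K.-1)%:R ->
        derive1 (derive1 f) x / derive1 f x
            - 2 * (K.-1)%:R / (1 - (K.-1)%:R * x) < 0))
  (gt : R) (hgt : 0 < gt < 1 / (K.-1)%:R)
  (hgt_eq : gt * (1 - (K.-1)%:R * gt) * derive1 f gt - f gt = 0)
  (hgt_uniq : forall x : R, 0 < x < 1 / (K.-1)%:R ->
     x * (1 - (K.-1)%:R * x) * derive1 f x - f x = 0 -> x = gt)
  (hPmax : forall (i : 'I_K) (x : R), etamin i <= x <= etamax i ->
     0 <= op_power K sigma2 bstar x <= Pmax i /\
     0 <= op_power K sigma2 gt x <= Pmax i)
  (lambda : R) (hlambda : 0 < lambda < 1)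
  (hlambda_bound : forall i : 'I_K,
     lambda <= etamin i * delta K f bstar gt /
       (etamin i * delta K f bstar gt
        + etamax i * ((K.-1)%:R * f bstar - delta K f bstar gt)))
  (d : measure_display) (T : measurableType d) (P : probability T R)
  (gain : nat -> 'I_K -> T -> R)
  (hgain_meas : forall t i, measurable_fun setT (gain t i))
  (hgain_bnd : forall t i w, etamin i <= gain t i w <= etamax i) :
  subgame_perfect P gain f Rate sigma2 lambda etamin etamax Pmax
    (@trigger R K sigma2 bstar gt).
Proof.
have K_gt0 : (0 < K)%N by apply: ltn_trans hK.
have k1_gt0 : 0 < (K.-1)%:R :> R by rewrite ltr0n -ltnS prednK.
have [f0 _ _ [f_incr _] _] := hf.
have f_ge0 x : 0 <= x -> 0 <= f x.
  by rewrite le_eqVlt => /orP[/eqP <-|x_gt0]; rewrite ?f0 // -f0 ltW ?f_incr.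
have ratio_le := sigmoidal_ratio_le hf hbstar hbstar_uniq.
have /andP[gt_gt0 gt_lt] := hgt.
have gt_lt1 : (K.-1)%:R * gt < 1 by move: gt_lt; rewrite ltr_pdivlMr // mulrC.
have etamin_gt0 i : 0 < etamin i by have /andP[] := heta i.
have /andP[lambda_gt0 lambda_lt1] := hlambda.
split=> [i ws ps gi /(hPmax i)[]|h _ i sd sd_valid].
  by rewrite /trigger; case: ifP.
have /andP[_ eta_le] := heta i.
have fb_gt0 : 0 < f bstar by rewrite -f0 f_incr.
have delta_le : delta K f bstar gt <= (K.-1)%:R * f bstar by apply: delta_le.
have [delta_gt0 incentive] := discount_threshold_incentive lambda_gt0
  (etamin_gt0 i) eta_le (mulr_gt0 k1_gt0 fb_gt0) delta_le (hlambda_bound i).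
have gain_range w t j : etamin j <= gain t j w <= etamax j by apply: hgain_bnd.
apply: ge0_le_integralT => w.
  by apply: cont_payoff_deviate_ge0;
    [done.. | exact: sd_valid | exact: etamin_gt0 | exact: gain_range].
by apply: cont_payoff_deviate_le;
  [done.. | exact: sd_valid | exact: etamin_gt0 | exact: gain_range | done | done].
Qed.
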